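(* Let $p>2$ be a prime, $N\ge2$ an integer with $p\nmid N+1$, and $m\in\{1,2\}$. Then in $\mathbb{Z}_{(p)}[X]$ \[ \mathbb{HD}^{mp-1}_{N+1}(X)\equiv(-(N+1))^{mp-1}\sum_{i=0}^{\left[\frac{mp-1}{N+1}\right]}\frac{\big(1-mpH_{i(N+1)}\big)\prod_{j=1}^N\{\tfrac{j}{N+1}\}_i}{(i!)^N}X^{i(N+1)}\pmod{p^2}. \]
   Context: $\mathbb{HD}^P_M(X)=\sum_{i=0}^{[P/M]}c_i(-M)^{P-iM}X^{iM}$ with $c_i=\binom{P}{i}\binom{P-i}{i}\cdots\binom{P-(M-1)i}{i}$ (the Hasse--Dwork polynomial, printed as $(-M)^P(1+M!\sum_{i\ge1}\binom{P}{M\times i}(X/(-M))^{iM})$ with $M!\binom{P}{M\times i}=c_i$). $\{a\}_i=a(a+1)\cdots(a+i-1)$ for $i\ge1$ and $\{a\}_0=1$; $H_k=1+\frac12+\cdots+\frac1k$. For $i(N+1)\ge p$ one writes $pH_{i(N+1)}=1+p(H_{i(N+1)}-\frac1p)$, so all coefficients lie in $\mathbb{Z}_{(p)}$. *)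

(* Polynomials over rat; Z_(p) realized as a predicate on rat. *)
From mathcomp Require Import all_boot all_order all_algebra.
Set Implicit Arguments. Unset Strict Implicit. Unset Printing Implicit Defensive.
Import Order.TTheory GRing.Theory Num.Theory.
Local Open Scope ring_scope.

Definition hd_coef (P M i : nat) : nat :=
  (\prod_(k < M) 'C(P - k * i, i))%N.

Definition HD (P M : nat) : {poly rat} :=
  \sum_(i < (P %/ M).+1)
     ((- (M%:R : rat)) ^+ (P - i * M) * (hd_coef P M i)%:R) *: 'X^(i * M).

Definition poch (a : rat) (i : nat) : rat := \prod_(k < i) (a + k%:R).

Definition harm (k : nat) : rat := \sum_(1 <= j < k.+1) (j%:R)^-1.

Definition HD_rhs (p N m : nat) : {poly rat} :=
  (- ((N.+1)%:R : rat)) ^+ (m * p - 1) *: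
  \sum_(i < ((m * p - 1) %/ N.+1).+1)
     (((1 - (m * p)%:R * harm (i * N.+1)) *
        \prod_(1 <= j < N.+1) poch (j%:R / (N.+1)%:R) i)
       / (i`! %:R) ^+ N) *: 'X^(i * N.+1).

Definition in_p2Zp (p : nat) (q : rat) : Prop :=
  exists (a : int) (b : nat), ~~ (p %| b)%N /\ q = (((p ^ 2)%N)%:Z * a)%:~R / b%:R.

Definition poly_cong_p2 (p : nat) (P Q : {poly rat}) : Prop :=
  forall k : nat, in_p2Zp p ((P - Q)`_k).

From mathcomp Require Import all_boot all_order all_algebra.
From mathcomp Require Import ring zify.
Import Order.TTheory GRing.Theory Num.Theory.
Local Open Scope ring_scope.

(* With P = mp - 1, c = P + 1 = mp and n = i(N+1), the coefficient of X^n in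
   HD^P_{N+1} is (-(N+1))^(P-n) P(P-1)...(P-n+1) / (i!)^(N+1), and
   P(P-1)...(P-n+1) = (-1)^n (1 - c)(2 - c)...(n - c) = (-1)^n n! (1 - c H_n)
   modulo c^2, because n! H_n is an integer.  On the right-hand side the
   Pochhammer symbols {j/(N+1)}_i for j = 1..N+1 interleave to give
   n! / (N+1)^n.  The two coefficients therefore differ by c^2 times an integer
   over (i!)^(N+1), and i < p since n <= P < 2p. *)

Lemma ffactD n a b : (n ^_ (a + b) = n ^_ a * (n - a) ^_ b)%N.
Proof.
elim: b => [|b IHb]; first by rewrite addn0 ffactn0 muln1.
by rewrite addnS !ffactnSr IHb subnDA mulnA.
Qed.

Lemma hd_coef_ffact P M i : (hd_coef P M i * i`! ^ M = P ^_ (i * M))%N.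
Proof.
rewrite /hd_coef; elim: M => [|M IHM]; first by rewrite big_ord0 muln0.
rewrite big_ord_recr /= expnS [(i`! * _)%N]mulnC mulnACA IHM bin_ffact.
by rewrite mulnS addnC ffactD [(M * i)%N]mulnC.
Qed.

Lemma ffact_prod_signed (n k : nat) : (k <= n)%N ->
  (n ^_ k)%:R = (-1) ^+ k * \prod_(j < k) (j.+1%:R - n.+1%:R) :> rat.
Proof.
move=> le_kn; rewrite ffact_prod natr_prod -[k in (-1) ^+ k]card_ord -prodrN.
apply: eq_bigr => j _; rewrite natrB; last by have := ltn_ord j; lia.
by rewrite opprB !mulrS opprD addrACA subrr add0r.
Qed.

Lemma harmS n : harm n.+1 = harm n + (n.+1%:R)^-1.
Proof. by rewrite /harm big_nat_recr. Qed.

Lemma fact_harm_nat n : exists g : nat, g%:R = n`!%:R * harm n :> rat.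
Proof.
elim: n => [|n [g Hg]]; first by exists 0%N; rewrite /harm big_geq ?mulr0.
exists (n.+1 * g + n`!)%N; rewrite harmS factS natrD !natrM Hg.
by field; rewrite nat1r pnatr_eq0.
Qed.

Lemma prod_sub_harm (c n : nat) : exists z : int,
  \prod_(k < n) (k.+1%:R - c%:R) =
    n`!%:R * (1 - c%:R * harm n) + c%:R ^+ 2 * z%:~R :> rat.
Proof.
elim: n => [|n [z IHz]].
  by exists 0; rewrite big_ord0 /harm big_geq // mulr0 subr0 mulr1 mulr0 addr0.
have [g Hg] := fact_harm_nat n.
exists (g%:Z + z * (n.+1%:Z - c%:Z)); rewrite big_ord_recr /= IHz harmS factS natrM.
rewrite intrD intrM intrB -!pmulrn Hg.
by field; rewrite nat1r pnatr_eq0.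
Qed.

Lemma pochS a i : poch a i.+1 = poch a i * (a + i%:R).
Proof. by rewrite /poch big_ord_recr. Qed.

Lemma poch1 i : poch 1 i = i`!%:R.
Proof.
elim: i => [|i IHi]; first by rewrite /poch big_ord0.
by rewrite pochS IHi factS natrM mulrC nat1r.
Qed.

Lemma fact_addn a b : ((a + b)`! = a`! * \prod_(1 <= j < b.+1) (a + j))%N.
Proof.
elim: b => [|b IHb]; first by rewrite big_geq ?addn0 ?muln1.
by rewrite big_nat_recr //= addnS factS IHb mulnC -mulnA.
Qed.

Lemma prod_poch_frac M i :
  \prod_(1 <= j < M.+1) poch (j%:R / M%:R) i * M%:R ^+ (i * M) = (i * M)`!%:R :> rat.
Proof.
case: M => [|M]; first by rewrite big_geq // muln0 expr0 mulr1.
elim: i => [|i IHi]; first by rewrite big1 => [|j _]; rewrite /poch ?big_ord0 ?mulr1.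
have step j : (j%:R / M.+1%:R + i%:R) * M.+1%:R = (i * M.+1 + j)%:R :> rat.
  by rewrite natrD natrM; field; rewrite nat1r pnatr_eq0.
under eq_bigr do rewrite pochS.
have powM : M.+1%:R ^+ M.+1 = \prod_(1 <= j < M.+2) M.+1%:R :> rat.
  by rewrite prodr_const_nat subn1.
rewrite big_split /= mulSnr exprD mulrACA IHi powM -big_split /=.
under eq_bigr do rewrite step.
by rewrite -natr_prod -natrM -fact_addn.
Qed.

Lemma prime_ndvd_fact p i : prime p -> (i < p)%N -> ~~ (p %| i`!)%N.
Proof.
move=> p_pr; elim: i => [|i IHi] lt_ip.
  by rewrite dvdn1 neq_ltn prime_gt1 ?orbT.
rewrite factS Euclid_dvdM // negb_or IHi ?andbT 1?ltnW //.
by apply/negP => /(dvdn_leq (ltn0Sn i)); rewrite leqNgt lt_ip.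
Qed.

Lemma in_p2Zp0 p : prime p -> in_p2Zp p 0.
Proof.
move=> p_pr; exists 0, 1%N; split; last by rewrite mulr0 mul0r.
by rewrite dvdn1 neq_ltn prime_gt1 ?orbT.
Qed.

Lemma in_p2ZpD p x y : prime p -> in_p2Zp p x -> in_p2Zp p y -> in_p2Zp p (x + y).
Proof.
move=> p_pr [a [b [ndvd_pb ->]]] [c [d [ndvd_pd ->]]].
exists (a * d%:Z + c * b%:Z), (b * d)%N.
split; first by rewrite Euclid_dvdM // negb_or ndvd_pb.
have nz_nat n : ~~ (p %| n)%N -> n%:R != 0 :> rat.
  by apply: contra; rewrite pnatr_eq0 => /eqP ->.
by rewrite natrM; field; rewrite !nz_nat.
Qed.

Lemma in_p2Zp_sqr_dvd p (c b : nat) (a : int) : (p %| c)%N -> ~~ (p %| b)%N ->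
  in_p2Zp p (c%:R ^+ 2 * a%:~R / b%:R).
Proof.
move=> /dvdnP[k ->] ndvd_pb; by exists (k%:Z ^+ 2 * a), b; split => //; ring.
Qed.

Lemma poly_cong_p2_sum p n (e : 'I_n -> nat) (a b : 'I_n -> rat) : prime p ->
  (forall i, in_p2Zp p (a i - b i)) ->
  poly_cong_p2 p (\sum_(i < n) a i *: 'X^(e i)) (\sum_(i < n) b i *: 'X^(e i)).
Proof.
move=> p_pr cong_ab k; rewrite -sumrB coef_sum.
apply: (big_ind (in_p2Zp p)) => [|x y|i _]; first exact: in_p2Zp0.
  exact: in_p2ZpD.
rewrite -scalerBl coefZ coefXn; case: eqP => _; first by rewrite mulr1.
by rewrite mulr0; apply: in_p2Zp0.
Qed.

Lemma HD_coef_cong p N P i : prime p -> (p %| P.+1)%N ->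
  (i * N.+1 <= P)%N -> (i < p)%N ->
  in_p2Zp p ((- N.+1%:R) ^+ (P - i * N.+1) * (hd_coef P N.+1 i)%:R -
    (- N.+1%:R) ^+ P * ((1 - P.+1%:R * harm (i * N.+1)) *
      \prod_(1 <= j < N.+1) poch (j%:R / N.+1%:R) i / i`!%:R ^+ N)).
Proof.
move=> p_pr dvd_pc le_nP lt_ip.
set M := N.+1; set n := (i * M)%N; set c := P.+1.
have nz_fact : i`!%:R != 0 :> rat by rewrite pnatr_eq0 -lt0n fact_gt0.
have nz_M : M%:R != 0 :> rat by rewrite pnatr_eq0.
have [z prodE] := prod_sub_harm c n.
have hdE : (hd_coef P M i)%:R = (-1) ^+ n *
    (n`!%:R * (1 - c%:R * harm n) + c%:R ^+ 2 * z%:~R) / i`!%:R ^+ M :> rat.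
  apply: (canRL (mulfK (expf_neq0 _ nz_fact))).
  by rewrite -[_ ^+ M]natrX -natrM hd_coef_ffact ffact_prod_signed // prodE.
have pochE : \prod_(1 <= j < M) poch (j%:R / M%:R) i =
    n`!%:R / (i`!%:R * M%:R ^+ n) :> rat.
  apply: (canRL (mulfK (mulf_neq0 nz_fact (expf_neq0 _ nz_M)))).
  by rewrite -(prod_poch_frac M i) [in RHS]big_nat_recr //= divff // poch1 mulrA.
have powE : (- M%:R) ^+ P = (- M%:R) ^+ (P - n) * (-1) ^+ n * M%:R ^+ n :> rat.
  by rewrite -mulrA -exprMn mulN1r -exprD subnK.
rewrite hdE pochE powE (_ : _ - _ =
  c%:R ^+ 2 * ((- M%:Z) ^+ (P - n) * (-1) ^+ n * z)%:~R / (i`! ^ M)%:R); last first.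
  rewrite !intrM !rmorphXn /= !intrN [i`!%:R ^+ M]exprS.
  by field; rewrite !expf_neq0 ?nz_fact.
by apply: in_p2Zp_sqr_dvd; rewrite // Euclid_dvdX // negb_and prime_ndvd_fact.
Qed.

Theorem proposition3p10 (p N m : nat) :
  prime p -> (2 < p)%N -> (2 <= N)%N -> ~~ (p %| N.+1)%N ->
  (m = 1%N \/ m = 2%N) ->
  poly_cong_p2 p (HD (m * p - 1) N.+1) (HD_rhs p N m).
Proof.
move=> p_pr _ le2N _ m12.
have p_gt0 := prime_gt0 p_pr.
rewrite /HD /HD_rhs; set P := (m * p - 1)%N.
have PS : P.+1 = (m * p)%N by rewrite /P; case: m12 => ->; lia.
rewrite -PS scaler_sumr.
rewrite [X in poly_cong_p2 _ _ X](eq_bigr _ (fun i _ => scalerA _ _ _)).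
apply: poly_cong_p2_sum => // i.
have le_iP : (i * N.+1 <= P)%N by rewrite -leq_divRL // -ltnS.
apply: HD_coef_cong => //; first by rewrite PS dvdn_mull.
have le_m2 : (m <= 2)%N by case: m12 => ->.
nia.
Qed.
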